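(* Let $A$ be a Banach algebra and $a_0\in Z(A)\setminus\{0\}$ with $\|a_0\|\le 1$. Then for every integer $n\ge 3$: (i) $Mul_n(A)\bullet_{a_0}Mul_2(A)\subseteq Mul_2(A)$; (ii) $Mul_{n-1}(A)$ is a closed left ideal of $(Mul_n(A),\bullet_{a_0})$, so that $Mul_2(A)\lhd Mul_3(A)\lhd\cdots\lhd Mul_{n-1}(A)\lhd Mul_n(A)\lhd\cdots$.
   Context: $Z(A)$ is the center of $A$. For $m\ge 2$, $Mul_m(A)$ is the set of bounded linear maps $T:A\to A$ with $T(a_1\cdots a_m)=a_1T(a_2\cdots a_m)=T(a_1\cdots a_{m-1})a_m$ for all $a_i\in A$. On $Mul_n(A)$ the product is $S\bullet_{a_0}T(a)=S(a_0^{n-2}T(a))$. *)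

(* norms are real-valued (Stdlib R); the scalar field is an
   abstract valued field (covers R and C). *)
From Stdlib Require Import Reals.
Open Scope R_scope.

Record ValField := {
  vK :> Type;
  v0 : vK; v1 : vK;
  vadd : vK -> vK -> vK; vmul : vK -> vK -> vK;
  vopp : vK -> vK; vinv : vK -> vK;
  vabs : vK -> R;
  vadd_assoc : forall x y z, vadd x (vadd y z) = vadd (vadd x y) z;
  vadd_comm : forall x y, vadd x y = vadd y x;
  vadd_0 : forall x, vadd v0 x = x;
  vadd_opp : forall x, vadd x (vopp x) = v0;
  vmul_assoc : forall x y z, vmul x (vmul y z) = vmul (vmul x y) z;
  vmul_comm : forall x y, vmul x y = vmul y x;
  vmul_1 : forall x, vmul v1 x = x;
  vmul_addl : forall x y z, vmul (vadd x y) z = vadd (vmul x z) (vmul y z);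
  v1_neq_0 : v1 <> v0;
  vmul_inv : forall x, x <> v0 -> vmul x (vinv x) = v1;
  vabs_nonneg : forall x, 0 <= vabs x;
  vabs_eq0 : forall x, vabs x = 0 <-> x = v0;
  vabs_mul : forall x y, vabs (vmul x y) = vabs x * vabs y;
  vabs_triangle : forall x y, vabs (vadd x y) <= vabs x + vabs y
}.

Record BanachAlgebra (F : ValField) := {
  ba :> Type;
  b0 : ba;
  badd : ba -> ba -> ba;
  bopp : ba -> ba;
  bscal : F -> ba -> ba;
  bmul : ba -> ba -> ba;
  bnorm : ba -> R;
  badd_assoc : forall x y z, badd x (badd y z) = badd (badd x y) z;
  badd_comm : forall x y, badd x y = badd y x;
  badd_0 : forall x, badd b0 x = x;
  badd_opp : forall x, badd x (bopp x) = b0;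
  bscal_1 : forall x, bscal (v1 F) x = x;
  bscal_assoc : forall c d x, bscal c (bscal d x) = bscal (vmul F c d) x;
  bscal_addr : forall c x y, bscal c (badd x y) = badd (bscal c x) (bscal c y);
  bscal_addl : forall c d x, bscal (vadd F c d) x = badd (bscal c x) (bscal d x);
  bmul_assoc : forall x y z, bmul x (bmul y z) = bmul (bmul x y) z;
  bmul_addl : forall x y z, bmul (badd x y) z = badd (bmul x z) (bmul y z);
  bmul_addr : forall x y z, bmul x (badd y z) = badd (bmul x y) (bmul x z);
  bmul_scall : forall c x y, bmul (bscal c x) y = bscal c (bmul x y);
  bmul_scalr : forall c x y, bmul x (bscal c y) = bscal c (bmul x y);
  bnorm_eq0 : forall x, bnorm x = 0 <-> x = b0;
  bnorm_triangle : forall x y, bnorm (badd x y) <= bnorm x + bnorm y;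
  bnorm_scal : forall c x, bnorm (bscal c x) = vabs F c * bnorm x;
  bnorm_mul : forall x y, bnorm (bmul x y) <= bnorm x * bnorm y;
  bcomplete : forall u : nat -> ba,
    (forall e, 0 < e -> exists N, forall m n, (N <= m)%nat -> (N <= n)%nat ->
        bnorm (badd (u m) (bopp (u n))) < e) ->
    exists l, forall e, 0 < e -> exists N, forall n, (N <= n)%nat ->
        bnorm (badd (u n) (bopp l)) < e
}.

Arguments b0 {F} _.
Arguments badd {F _} _ _.
Arguments bopp {F _} _.
Arguments bscal {F _} _ _.
Arguments bmul {F _} _ _.
Arguments bnorm {F _} _.

Section Defs.
Variables (F : ValField) (A : BanachAlgebra F).

Definition in_center (z : A) : Prop := forall a : A, bmul z a = bmul a z.

Definition bounded_linear (T : A -> A) : Prop :=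
  (forall x y, T (badd x y) = badd (T x) (T y)) /\
  (forall c x, T (bscal c x) = bscal c (T x)) /\
  (exists M : R, forall x, bnorm (T x) <= M * bnorm x).

(* prodn a k l = a_k a_(k+1) ... a_(k+l)  (l+1 factors). *)
Fixpoint prodn (a : nat -> A) (k l : nat) : A :=
  match l with
  | O => a k
  | S l' => bmul (a k) (prodn a (S k) l')
  end.

(* Mul_m(A): with a_1,...,a_m :
   a1...am = prodn a 1 (m-1), a2...am = prodn a 2 (m-2),
   a1...a_(m-1) = prodn a 1 (m-2). *)
Definition Mul (m : nat) (T : A -> A) : Prop :=
  bounded_linear T /\
  forall a : nat -> A,
    T (prodn a 1 (m - 1)) = bmul (a 1%nat) (T (prodn a 2 (m - 2))) /\
    T (prodn a 1 (m - 1)) = bmul (T (prodn a 1 (m - 2))) (a m).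

(* x ^ (k+1) *)
Fixpoint apow1 (x : A) (k : nat) : A :=
  match k with
  | O => x
  | S k' => bmul x (apow1 x k')
  end.

(* The product on Mul_n(A): (S •_{a0} T)(a) = S(a0^(n-2) T(a)), n >= 3. *)
Definition bullet (n : nat) (a0 : A) (S T : A -> A) : A -> A :=
  fun a => S (bmul (apow1 a0 (n - 3)) (T a)).

Definition op_converges (Tk : nat -> A -> A) (T : A -> A) : Prop :=
  forall e, 0 < e -> exists N, forall k, (N <= k)%nat ->
    forall x, bnorm (badd (Tk k x) (bopp (T x))) <= e * bnorm x.

Definition closed_left_ideal (n : nat) (a0 : A) (I : (A -> A) -> Prop) : Prop :=
  (forall T, I T -> Mul n T) /\
  I (fun _ => b0 A) /\
  (forall S T, I S -> I T -> I (fun x => badd (S x) (T x))) /\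
  (forall (c : F) T, I T -> I (fun x => bscal c (T x))) /\
  (forall S T, Mul n S -> I T -> I (bullet n a0 S T)) /\
  (forall Tk T, (forall k, I (Tk k)) -> Mul n T -> op_converges Tk T -> I T).

End Defs.
Arguments in_center {F A} _.
Arguments Mul {F A} _ _.
Arguments bullet {F A} _ _ _ _ _.
Arguments closed_left_ideal {F A} _ _ _.
Arguments bounded_linear {F A} _.
Arguments prodn {F A} _ _ _.
Arguments apow1 {F A} _ _.
Arguments op_converges {F A} _ _.

From Stdlib Require Import Reals Lra Lia.
Open Scope R_scope.

(* Write P := a0^(n-2).  Choosing a = (x, a0, ..., a0, y)
   resp. a = (a0, ..., a0, y, z) in the defining identities of S in Mul_n gives
   S(x P y) = x S(P y) and S(P y z) = S(P y) z for all x, y, z.  Since P is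
   central, S o (P .) o T therefore inherits both multiplier identities of
   T, for T in any Mul_m.  Mul_m is contained in Mul_(m+1) (merge two adjacent factors), is a linear
   subspace, and is closed under operator-norm limits because its defining
   identities are continuous.  The hypotheses a0 <> 0 and ||a0|| <= 1 only
   serve to make (Mul_n(A), .) a Banach algebra; the inclusions do not need
   them. *)

Section BanachAlgebraFacts.
Context {F : ValField} {A : BanachAlgebra F}.

Lemma badd_0r (x : A) : badd x (b0 A) = x.
Proof. rewrite badd_comm. apply badd_0. Qed.

Lemma badd_oppl (x : A) : badd (bopp x) x = b0 A.
Proof. rewrite badd_comm. apply badd_opp. Qed.

Lemma bopp_unique (x y : A) : badd x y = b0 A -> y = bopp x.
Proof.
  intro H. rewrite <- (badd_0 _ _ y), <- (badd_oppl x), <- badd_assoc, H.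
  apply badd_0r.
Qed.

Lemma bopp_involutive (x : A) : bopp (bopp x) = x.
Proof. symmetry. apply bopp_unique, badd_oppl. Qed.

Lemma bsub_eq0 (x y : A) : badd x (bopp y) = b0 A -> x = y.
Proof.
  intro H. apply bopp_unique in H.
  rewrite <- (bopp_involutive x), <- H. apply bopp_involutive.
Qed.

Lemma badd_sub_cancel (x y z : A) : badd (badd x (bopp y)) (badd y z) = badd x z.
Proof.
  rewrite badd_assoc, <- (badd_assoc _ _ x (bopp y) y), badd_oppl, badd_0r.
  reflexivity.
Qed.

Lemma bopp_sub (x y : A) : bopp (badd x (bopp y)) = badd y (bopp x).
Proof. symmetry. apply bopp_unique. rewrite badd_sub_cancel. apply badd_opp. Qed.

Lemma badd_ACA (a b c d : A) :
  badd (badd a b) (badd c d) = badd (badd a c) (badd b d).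
Proof.
  rewrite !badd_assoc. f_equal.
  rewrite <- !badd_assoc. f_equal. apply badd_comm.
Qed.

Lemma badd_idem_eq0 (x : A) : badd x x = x -> x = b0 A.
Proof.
  intro H.
  assert (H0 : badd (badd x x) (bopp x) = badd x (bopp x)) by now rewrite H.
  now rewrite <- badd_assoc, badd_opp, badd_0r in H0.
Qed.

Lemma additive_0 (L : A -> A) :
  (forall u v, L (badd u v) = badd (L u) (L v)) -> L (b0 A) = b0 A.
Proof. intro HL. apply badd_idem_eq0. now rewrite <- HL, badd_0. Qed.

Lemma additive_opp (L : A -> A) :
  (forall u v, L (badd u v) = badd (L u) (L v)) ->
  forall u, L (bopp u) = bopp (L u).
Proof.
  intros HL u. apply bopp_unique. rewrite <- HL, badd_opp. now apply additive_0.
Qed.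

Lemma bscal_0l (x : A) : bscal (v0 F) x = b0 A.
Proof. apply badd_idem_eq0. now rewrite <- bscal_addl, vadd_0. Qed.

Lemma bopp_scal (x : A) : bopp x = bscal (vopp F (v1 F)) x.
Proof.
  symmetry. apply bopp_unique.
  rewrite <- (bscal_1 _ _ x) at 1. rewrite <- bscal_addl, vadd_opp.
  apply bscal_0l.
Qed.

Lemma bnorm_0 : bnorm (b0 A) = 0.
Proof. now apply bnorm_eq0. Qed.

Lemma bnorm_ge0 (x : A) : 0 <= bnorm x.
Proof.
  pose proof (bnorm_triangle _ _ x (bopp x)) as H.
  rewrite badd_opp, bnorm_0, bopp_scal, bnorm_scal in H.
  pose proof (vabs_nonneg F (vopp F (v1 F))). nra.
Qed.

(* With c := |-1|, applying ||-u|| = c ||u|| twice gives ||x|| = c^2 ||x||,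
   so c = 1 unless x = 0. *)
Lemma bnorm_opp (x : A) : bnorm (bopp x) = bnorm x.
Proof.
  assert (Hx : bnorm x = vabs F (vopp F (v1 F)) * bnorm (bopp x)).
  { rewrite <- bnorm_scal, <- bopp_scal, bopp_involutive. reflexivity. }
  rewrite bopp_scal, bnorm_scal in *.
  set (c := vabs F (vopp F (v1 F))) in *.
  assert (Hc : 0 <= c) by apply vabs_nonneg.
  pose proof (bnorm_ge0 x) as Hn.
  destruct (Req_dec (bnorm x) 0) as [H0 | H0].
    - rewrite H0. ring.
  - assert (Hc1 : (c * c - 1) * bnorm x = 0) by lra.
    apply Rmult_integral in Hc1. destruct Hc1 as [Hc1 | ]; [|contradiction].
    assert (Hc_one : c = 1) by nra. rewrite Hc_one. ring.
Qed.

Lemma eq_of_bnorm_sub_le (x y : A) (C : R) : 0 <= C ->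
  (forall e, 0 < e -> bnorm (badd x (bopp y)) <= e * C) -> x = y.
Proof.
  intros HC H. apply bsub_eq0, bnorm_eq0.
  pose proof (bnorm_ge0 (badd x (bopp y))) as Hd.
  set (d := bnorm (badd x (bopp y))) in *.
  destruct (Req_dec d 0) as [|Hd0]; [assumption|exfalso].
  set (e := d / (2 * (C + 1))).
  assert (He : e * (2 * (C + 1)) = d) by (unfold e; field; lra).
  assert (Hep : 0 < e) by (unfold e; apply Rdiv_lt_0_compat; lra).
  specialize (H e Hep). nra.
Qed.

Lemma apow1_in_center (a0 : A) : in_center a0 -> forall k, in_center (apow1 a0 k).
Proof.
  intros Hc k. induction k as [|k IH]; simpl; [exact Hc|].
  intro a. now rewrite <- bmul_assoc, IH, bmul_assoc, Hc, <- bmul_assoc.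
Qed.

End BanachAlgebraFacts.

Section Products.
Context {F : ValField} {A : BanachAlgebra F}.
Implicit Types (a b : nat -> A).

Lemma prodn_recl a k l : prodn a k (S l) = bmul (a k) (prodn a (S k) l).
Proof. reflexivity. Qed.

Lemma prodn_recr a l : forall k,
  prodn a k (S l) = bmul (prodn a k l) (a (S (k + l))).
Proof.
  induction l as [|l IH]; intro k.
  - simpl. now rewrite Nat.add_0_r.
  - rewrite prodn_recl, IH, prodn_recl, bmul_assoc.
    now replace (S k + l)%nat with (k + S l)%nat by lia.
Qed.

Lemma eq_prodn a b l : forall k,
  (forall i, (k <= i <= k + l)%nat -> a i = b i) -> prodn a k l = prodn b k l.
Proof.
  induction l as [|l IH]; intros k H; simpl.
  - apply H. lia.
  - rewrite H by lia. f_equal. apply IH. intros; apply H; lia.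
Qed.

Lemma prodn_shift a l : forall k, prodn (fun i => a (S i)) k l = prodn a (S k) l.
Proof. induction l as [|l IH]; intro k; simpl; [|rewrite IH]; reflexivity. Qed.

Lemma prodn_apow1 a (a0 y : A) l : forall k,
  (forall i, (k <= i <= k + l)%nat -> a i = a0) -> a (S (k + l)) = y ->
  prodn a k (S l) = bmul (apow1 a0 l) y.
Proof.
  induction l as [|l IH]; intros k Ha Hy.
  - simpl. rewrite Ha, <- Hy, Nat.add_0_r by lia. reflexivity.
  - rewrite prodn_recl, (IH (S k)).
    + rewrite Ha by lia. apply bmul_assoc.
    + intros i Hi. apply Ha. lia.
    + now replace (S (S k + l)) with (S (k + S l)) by lia.
Qed.

Lemma prodn_merge_last a b l : forall k,
  (forall i, (k <= i < k + l)%nat -> b i = a i) ->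
  b (k + l)%nat = bmul (a (k + l)%nat) (a (S (k + l))) ->
  prodn b k l = prodn a k (S l).
Proof.
  induction l as [|l IH]; intros k H1 H2.
  - simpl. now rewrite Nat.add_0_r in H2.
  - rewrite !prodn_recl, H1 by lia. f_equal. apply IH.
    + intros; apply H1; lia.
    + now replace (S k + l)%nat with (k + S l)%nat by lia.
Qed.

End Products.

Section Multipliers.
Context {F : ValField} {A : BanachAlgebra F}.
Implicit Types (T U : A -> A).

Lemma bounded_linear_nonneg_bound T : bounded_linear T ->
  exists M, 0 <= M /\ forall x, bnorm (T x) <= M * bnorm x.
Proof.
  intros [_ [_ [M HM]]]. exists (Rmax M 0). split; [apply Rmax_r|].
  intro x. apply (Rle_trans _ (M * bnorm x)); [apply HM|].
  apply Rmult_le_compat_r; [apply bnorm_ge0 | apply Rmax_l].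
Qed.

Lemma bounded_linear_comp U T :
  bounded_linear U -> bounded_linear T -> bounded_linear (fun x => U (T x)).
Proof.
  intros HU HT.
  destruct (bounded_linear_nonneg_bound U HU) as [MU [HMU BU]].
  destruct (bounded_linear_nonneg_bound T HT) as [MT [_ BT]].
  destruct HU as [Ua [Us _]], HT as [Ta [Ts _]].
  split; [|split].
  - intros x y. now rewrite Ta, Ua.
  - intros c x. now rewrite Ts, Us.
  - exists (MU * MT). intro x. apply (Rle_trans _ (MU * bnorm (T x))); [apply BU|].
    rewrite Rmult_assoc. apply Rmult_le_compat_l; [exact HMU | apply BT].
Qed.

Lemma bounded_linear_mull (P : A) : bounded_linear (bmul P).
Proof.
  split; [|split].
  - apply bmul_addr.
  - intros c x. apply bmul_scalr.
  - exists (bnorm P). apply bnorm_mul.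
Qed.

Lemma Mul_SS j T : Mul (S (S j)) T <->
  bounded_linear T /\ forall a : nat -> A,
    T (prodn a 1 (S j)) = bmul (a 1%nat) (T (prodn a 2 j)) /\
    T (prodn a 1 (S j)) = bmul (T (prodn a 1 j)) (a (S (S j))).
Proof. unfold Mul. cbn [Nat.sub]. now rewrite Nat.sub_0_r. Qed.

Lemma Mul_0 m : Mul m (fun _ : A => b0 A).
Proof.
  split; [split; [|split]|].
  - intros x y. now rewrite badd_0.
  - intro c. symmetry. exact (additive_0 (bscal c) (bscal_addr _ _ c)).
  - exists 0. intro x. rewrite bnorm_0. lra.
  - intro a. split; symmetry.
    + exact (additive_0 (bmul (a 1%nat)) (bmul_addr _ _ _)).
    + exact (additive_0 (fun u => bmul u (a m)) (fun u v => bmul_addl _ _ u v _)).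
Qed.

Lemma Mul_add m U T : Mul m U -> Mul m T -> Mul m (fun x => badd (U x) (T x)).
Proof.
  intros [[Ua [Us [MU BU]]] HU] [[Ta [Ts [MT BT]]] HT].
  split; [split; [|split]|].
  - intros x y. now rewrite Ua, Ta, badd_ACA.
  - intros c x. now rewrite Us, Ts, bscal_addr.
  - exists (MU + MT). intro x. eapply Rle_trans; [apply bnorm_triangle|].
    rewrite Rmult_plus_distr_r. apply Rplus_le_compat; auto.
  - intro a. destruct (HU a) as [U1 U2], (HT a) as [T1 T2].
    split; [rewrite U1, T1, bmul_addr | rewrite U2, T2, bmul_addl]; reflexivity.
Qed.

Lemma Mul_scale m (c : F) T : Mul m T -> Mul m (fun x => bscal c (T x)).
Proof.
  intros [[Ta [Ts [MT BT]]] HT]. split; [split; [|split]|].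
  - intros x y. now rewrite Ta, bscal_addr.
  - intros d x. now rewrite Ts, !bscal_assoc, vmul_comm.
  - exists (vabs F c * MT). intro x. rewrite bnorm_scal, Rmult_assoc.
    apply Rmult_le_compat_l; [apply vabs_nonneg | apply BT].
  - intro a. destruct (HT a) as [T1 T2].
    split; [rewrite T1, bmul_scalr | rewrite T2, bmul_scall]; reflexivity.
Qed.

Lemma Mul_succ m T : (2 <= m)%nat -> Mul m T -> Mul (S m) T.
Proof.
  intros Hm HT. destruct m as [|[|j]]; [lia|lia|].
  destruct (proj1 (Mul_SS j T) HT) as [HB H].
  apply (proj2 (Mul_SS (S j) T)). split; [exact HB|].
  intro a. split.
  - (* merge the last two factors *)
    pose (b := fun i => if Nat.eqb i (S (S j))
                        then bmul (a (S (S j))) (a (S (S (S j)))) else a i).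
    assert (Hb : forall k l, (k + l = S (S j))%nat -> prodn b k l = prodn a k (S l)).
    { intros k l Hkl. apply prodn_merge_last.
      - intros i Hi. unfold b. now rewrite (proj2 (Nat.eqb_neq i (S (S j)))) by lia.
      - unfold b. now rewrite Hkl, Nat.eqb_refl. }
    destruct (H b) as [H1 _]. now rewrite !Hb in H1 by lia.
  - (* merge the first two factors *)
    pose (c := fun i => if Nat.eqb i 1 then bmul (a 1%nat) (a 2%nat) else a (S i)).
    assert (Hc : forall l, prodn c 1 l = prodn a 1 (S l)).
    { intros [|l]; [reflexivity|].
      rewrite prodn_recl, (eq_prodn c (fun i => a (S i)) l 2), prodn_shift.
      - cbn [c Nat.eqb]. now rewrite <- bmul_assoc.
      - intros i Hi. unfold c. now rewrite (proj2 (Nat.eqb_neq i 1)) by lia. }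
    destruct (H c) as [_ H2]. now rewrite !Hc in H2.
Qed.

Lemma Mul_apow1_mull (a0 : A) j U x y : Mul (S (S (S j))) U ->
  U (bmul x (bmul (apow1 a0 j) y)) = bmul x (U (bmul (apow1 a0 j) y)).
Proof.
  intro HU. destruct (proj1 (Mul_SS (S j) U) HU) as [_ H].
  pose (a := fun i => if Nat.eqb i 1 then x
                      else if Nat.eqb i (S (S (S j))) then y else a0).
  destruct (H a) as [H1 _].
      rewrite (prodn_recl a 1), (prodn_apow1 a a0 y j 2) in H1; [exact H1| |].
  - intros i Hi. unfold a.
    now rewrite (proj2 (Nat.eqb_neq i 1)), (proj2 (Nat.eqb_neq i (S (S (S j))))) by lia.
  - unfold a. simpl. now rewrite Nat.eqb_refl.
Qed.

Lemma Mul_apow1_mulr (a0 : A) j U y z : Mul (S (S (S j))) U ->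
  U (bmul (bmul (apow1 a0 j) y) z) = bmul (U (bmul (apow1 a0 j) y)) z.
Proof.
  intro HU. destruct (proj1 (Mul_SS (S j) U) HU) as [_ H].
  pose (a := fun i => if Nat.eqb i (S (S j)) then y
                      else if Nat.eqb i (S (S (S j))) then z else a0).
  destruct (H a) as [_ H2].
  assert (Ey : prodn a 1 (S j) = bmul (apow1 a0 j) y).
  { apply prodn_apow1.
    - intros i Hi. unfold a.
      now rewrite (proj2 (Nat.eqb_neq i (S (S j)))), (proj2 (Nat.eqb_neq i (S (S (S j))))) by lia.
    - unfold a. cbn [Nat.add]. now rewrite Nat.eqb_refl. }
  assert (Ez : a (S (S (S j))) = z).
  { unfold a. now rewrite (proj2 (Nat.eqb_neq (S (S (S j))) (S (S j)))), Nat.eqb_refl by lia. }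
    rewrite (prodn_recr a (S j) 1), Ey in H2. cbn [Nat.add] in H2.
  now rewrite Ez in H2.
Qed.

Lemma bullet_Mul n m (a0 : A) U T : in_center a0 -> (3 <= n)%nat ->
  Mul n U -> Mul m T -> Mul m (bullet n a0 U T).
Proof.
  intros Ha0 Hn HU [HT HTa]. destruct n as [|[|[|j]]]; [lia|lia|lia|].
  unfold bullet. replace (S (S (S j)) - 3)%nat with j by lia.
  pose proof (apow1_in_center a0 Ha0 j) as HP.
  split.
  - apply (bounded_linear_comp U (fun x => bmul (apow1 a0 j) (T x))); [apply HU|].
    exact (bounded_linear_comp _ T (bounded_linear_mull _) HT).
  - intro a. destruct (HTa a) as [T1 T2]. split.
    + rewrite T1, bmul_assoc, (HP (a 1%nat)), <- bmul_assoc.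
      now apply Mul_apow1_mull.
    + rewrite T2, bmul_assoc. now apply Mul_apow1_mulr.
Qed.

Lemma op_converges_transfer (Tk : nat -> A -> A) T (L : A -> A) (C : R) (p q : A) :
  op_converges Tk T -> 0 <= C ->
  (forall u v, L (badd u v) = badd (L u) (L v)) ->
  (forall u, bnorm (L u) <= C * bnorm u) ->
  (forall k, Tk k p = L (Tk k q)) -> T p = L (T q).
Proof.
  intros Hconv HC HL BL HTk.
  apply (eq_of_bnorm_sub_le _ _ (bnorm p + C * bnorm q)).
  { pose proof (bnorm_ge0 p). pose proof (bnorm_ge0 q). nra. }
  intros e He. destruct (Hconv e He) as [N HN].
  assert (E : badd (T p) (bopp (L (T q))) =
              badd (bopp (badd (Tk N p) (bopp (T p))))
                   (L (badd (Tk N q) (bopp (T q))))).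
  { now rewrite bopp_sub, HL, (additive_opp L HL), <- HTk, badd_sub_cancel. }
  rewrite E. eapply Rle_trans; [apply bnorm_triangle|]. rewrite bnorm_opp.
  pose proof (HN N (le_n N) p) as Hp. pose proof (HN N (le_n N) q) as Hq.
  pose proof (BL (badd (Tk N q) (bopp (T q)))) as HLq.
  assert (C * bnorm (badd (Tk N q) (bopp (T q))) <= C * (e * bnorm q))
    by (apply Rmult_le_compat_l; assumption).
  lra.
Qed.

Lemma Mul_op_closed m (Tk : nat -> A -> A) T :
  (forall k, Mul m (Tk k)) -> bounded_linear T -> op_converges Tk T -> Mul m T.
Proof.
  intros HTk HT Hconv. split; [exact HT|]. intro a. split.
  - apply (op_converges_transfer Tk T (bmul (a 1%nat)) (bnorm (a 1%nat)));
      [exact Hconv | apply bnorm_ge0 | apply bmul_addr | apply bnorm_mul |].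
    intro k. exact (proj1 (proj2 (HTk k) a)).
  - apply (op_converges_transfer Tk T (fun u => bmul u (a m)) (bnorm (a m)));
      [exact Hconv | apply bnorm_ge0 | intros; apply bmul_addl | |].
    + intro u. rewrite Rmult_comm. apply bnorm_mul.
    + intro k. exact (proj2 (proj2 (HTk k) a)).
Qed.

End Multipliers.

Theorem mainTheorem8 (F : ValField) (A : BanachAlgebra F) (a0 : A)
  (Ha0c : in_center a0) (Ha0nz : a0 <> b0 A) (Ha0n : bnorm a0 <= 1) :
  forall n : nat, (3 <= n)%nat ->
    (forall S T, Mul n S -> Mul 2 T -> Mul 2 (bullet n a0 S T)) /\
    closed_left_ideal n a0 (Mul (n - 1)).
Proof.
  intros n Hn. split; [intros; now apply bullet_Mul|].
  split; [|split; [|split; [|split; [|split]]]].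
  - intros T HT. replace n with (S (n - 1)) at 1 by lia.
    apply Mul_succ; [lia | exact HT].
  - apply Mul_0.
  - intros; now apply Mul_add.
  - intros; now apply Mul_scale.
  - intros; now apply bullet_Mul.
  - intros Tk T HTk HT. apply Mul_op_closed; [exact HTk | apply HT].
Qed.
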